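(* With respect to the set of pure Nash equilibrium outcomes, the mechanism $\mathcal{CUDD}$ satisfies symmetry, invariance with respect to repetition of alternatives (IRA), and existence of a Pareto efficient equilibrium (for every collection $A$, some pure Nash equilibrium outcome of $\Gamma_{\mathcal{CUDD}}(A)$ is Pareto efficient).
   Context: Two players bargain over a collection (multiset) $A=(a^k)_{k\in[n]}$, $a^k\in[0,1]^2$, $a^k_i$ being player $i$'s utility; players are risk neutral and outcomes are expected-utility vectors; $NEO(A)$ denotes the set of pure Nash equilibrium outcomes. Mechanism $\mathcal{CUDD}$: each player $i$ submits $(g_i,d_i)\in[n]^2$; if $g_1=g_2$ the chosen index is $g_1$, otherwise it is uniform over $\{d_1,d_2\}$. Symmetry: a collection is symmetric if for all $x_1,x_2$, $|\{k:a^k=(x_1,x_2)\}|=|\{k:a^k=(x_2,x_1)\}|$; the mechanism is symmetric if $NEO(A)$ is closed under swapping coordinates for every symmetric $A$. IRA: for $j\in[n]$ let $(A,j)=(a_1,\dots,a_n,a_j)$; IRA means $NEO(A)=NEO((A,j))$ for all $A,j$. An outcome $x$ is Pareto efficient if there is no $a\in A$ with $a_1>x_1$ and $a_2>x_2$. *)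

From mathcomp Require Import all_boot all_order all_algebra.
From mathcomp Require Import reals.
Set Implicit Arguments. Unset Strict Implicit. Unset Printing Implicit Defensive.
Import Order.TTheory GRing.Theory Num.Theory.
Local Open Scope ring_scope.

Section CUDD.
Variable R : realType.

(* A collection (multiset) of n alternatives, indexed by 'I_n;
   (A k).1 / (A k).2 are the utilities of players 1 / 2. *)
Definition collection (n : nat) := 'I_n -> R * R.

Definition in_unit_square n (A : collection n) : Prop :=
  forall k, 0 <= (A k).1 <= 1 /\ 0 <= (A k).2 <= 1.

Definition strategy (n : nat) := ('I_n * 'I_n)%type.

(* Expected value of the utility f under CUDD at profile (s1, s2):
   if g1 = g2 the alternative g1 is chosen, otherwise the index is uniform
   over the set {d1, d2}. *)
Definition cudd_eu n (A : collection n) (f : R * R -> R)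
    (s1 s2 : strategy n) : R :=
  if s1.1 == s2.1 then f (A s1.1)
  else (\sum_(k in [set s1.2; s2.2]) f (A k)) / (#|[set s1.2; s2.2]|)%:R.

Definition cudd_outcome n (A : collection n) (s1 s2 : strategy n) : R * R :=
  (cudd_eu A fst s1 s2, cudd_eu A snd s1 s2).

Definition is_pure_NE n (A : collection n) (s1 s2 : strategy n) : Prop :=
  (forall t1 : strategy n, (cudd_outcome A t1 s2).1 <= (cudd_outcome A s1 s2).1) /\
  (forall t2 : strategy n, (cudd_outcome A s1 t2).2 <= (cudd_outcome A s1 s2).2).

Definition NEO n (A : collection n) (x : R * R) : Prop :=
  exists s1 s2 : strategy n, is_pure_NE A s1 s2 /\ x = cudd_outcome A s1 s2.

Definition symmetric_collection n (A : collection n) : Prop :=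
  forall x1 x2 : R,
    #|[set k | A k == (x1, x2)]| = #|[set k | A k == (x2, x1)]|.

Definition repeat_alt n (A : collection n) (j : 'I_n) : collection n.+1 :=
  fun k => if unlift ord_max k is Some k' then A k' else A j.

Definition swap_outcome (x : R * R) : R * R := (x.2, x.1).

Definition pareto_efficient n (A : collection n) (x : R * R) : Prop :=
  ~ exists k, x.1 < (A k).1 /\ x.2 < (A k).2.

End CUDD.

(* An equilibrium outcome of CUDD is either an agreement on an alternative
   from which no player gains by deviating (a deviating player gets the
   average of his favourite alternative and the opponent's default), or, when
   the proposals differ, the midpoint of a favourite alternative of player 1
   and one of player 2.  This description involves only the set of
   alternatives, which repetition leaves unchanged and, for a symmetric
   collection, swapping coordinates too.  For Pareto efficiency call g
   acceptable if it is an agreement outcome even against the least favourable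
   defaults: anything dominating an acceptable alternative, or dominating the
   midpoint of the two favourites, is acceptable.  So either an acceptable
   alternative of maximal utility sum, or that midpoint, is efficient. *)
From mathcomp Require Import all_boot all_order all_algebra.
From mathcomp Require Import reals lra.
Import Order.TTheory GRing.Theory Num.Theory.
Local Open Scope ring_scope.
Set Implicit Arguments. Unset Strict Implicit.

Section Characterization.
Variable R : realType.

Definition midpoint (p q : R * R) : R * R := ((p.1 + q.1) / 2, (p.2 + q.2) / 2).

Lemma midpointxx (p : R * R) : midpoint p p = p.
Proof. by case: p => p1 p2; rewrite /midpoint /=; congr (_, _); lra. Qed.

Definition in_collection n (A : collection R n) (y : R * R) : Prop :=
  exists k, A k = y.

(* [b1] is player 2's default, against which player 1 could deviate. *)
Definition agreement_outcome (S : R * R -> Prop) (x : R * R) : Prop :=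
  exists b1 b2, [/\ S x, S b1, S b2 &
    forall a, S a -> a.1 + b1.1 <= 2 * x.1 /\ a.2 + b2.2 <= 2 * x.2].

Definition disagreement_outcome (S : R * R -> Prop) (x : R * R) : Prop :=
  exists p q, [/\ S p, S q, x = midpoint p q &
    forall a, S a -> a.1 <= p.1 /\ a.2 <= q.2].

Definition neo_spec (S : R * R -> Prop) (x : R * R) : Prop :=
  agreement_outcome S x \/ disagreement_outcome S x.

Lemma cudd_outcomeE n (A : collection R n) (s1 s2 : strategy n) :
  cudd_outcome A s1 s2 =
  if s1.1 == s2.1 then A s1.1 else midpoint (A s1.2) (A s2.2).
Proof.
rewrite /cudd_outcome /cudd_eu; case: ifP => _; first by case: (A s1.1).
have [<-|ne] := eqVneq s1.2 s2.2.
  by rewrite setUid !big_set1 cards1 !divr1 midpointxx; case: (A s1.2).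
by rewrite !big_setU1 ?inE ?ne //= !big_set1 cards2 ne.
Qed.

Lemma NEO_neo_spec n (A : collection R n) x :
  NEO A x -> neo_spec (in_collection A) x.
Proof.
case=> [[g1 d1]] [[g2 d2]] [[H1 H2] ->]; rewrite cudd_outcomeE /=.
have [e|ne] := eqVneq g1 g2.
  subst g2; left; exists (A d2), (A d1); split; try by eexists.
  move=> _ [a <-].
  (* breaking the agreement means proposing some [k != g1] *)
  case: (pickP (fun k => k != g1)) => [k nk|all_g1].
    have := H1 (k, a); have := H2 (k, a).
    rewrite !cudd_outcomeE /= eqxx (negbTE nk) eq_sym (negbTE nk) /=; lra.
  have eq_g1 k : k = g1 by apply/eqP; move/negbFE: (all_g1 k).
  by rewrite (eq_g1 a) (eq_g1 d1) (eq_g1 d2); lra.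
right; exists (A d1), (A d2); split; try by eexists.
move=> _ [a <-]; have := H1 (g1, a); have := H2 (g2, a).
by rewrite !cudd_outcomeE /= (negbTE ne) /=; lra.
Qed.

Lemma neo_spec_NEO n (A : collection R n) x :
  neo_spec (in_collection A) x -> NEO A x.
Proof.
have inA a : in_collection A (A a) by exists a.
case=> [[_ [_ [[g <-] [k1 <-] [k2 <-] H]]]|[_ [_ [[kp <-] [kq <-] -> H]]]].
  exists (g, k2), (g, k1); rewrite cudd_outcomeE eqxx; split=> //.
  split=> [[t a]|[t a]]; rewrite !cudd_outcomeE eqxx;
    (case: eqP => [->|_] /=; first lra); have [] := H _ (inA a); lra.
have out : cudd_outcome A (kp, kp) (kq, kq) = midpoint (A kp) (A kq).
  by rewrite cudd_outcomeE /=; case: eqP => [->|//]; rewrite midpointxx.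
exists (kp, kp), (kq, kq); rewrite out; split=> //.
have [[Hp _] [_ Hq]] := (H _ (inA kq), H _ (inA kp)).
split=> [[t a]|[t a]]; rewrite out cudd_outcomeE /=.
  by case: eqP => [->|_] /=; [|have [] := H _ (inA a)]; lra.
by case: eqP => _ /=; [|have [] := H _ (inA a)]; lra.
Qed.

Lemma NEO_spec n (A : collection R n) x :
  NEO A x <-> neo_spec (in_collection A) x.
Proof. by split; [apply: NEO_neo_spec|apply: neo_spec_NEO]. Qed.

Lemma neo_spec_ext (S S' : R * R -> Prop) x :
  (forall y, S y <-> S' y) -> neo_spec S x -> neo_spec S' x.
Proof.
move=> SS' [[b1 [b2 [Sx Sb1 Sb2 H]]]|[p [q [Sp Sq -> H]]]].
  by left; exists b1, b2; split=> [|||a /SS'/H //]; apply/SS'.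
by right; exists p, q; split=> [||//|a /SS'/H //]; apply/SS'.
Qed.

Lemma swap_outcomeK : involutive (@swap_outcome R).
Proof. by case. Qed.

Lemma neo_spec_swap (S : R * R -> Prop) x :
  neo_spec S x -> neo_spec (S \o @swap_outcome R) (swap_outcome x).
Proof.
have SK y : (S \o @swap_outcome R) (swap_outcome y) = S y.
  by rewrite /= swap_outcomeK.
case=> [[b1 [b2 [Sx Sb1 Sb2 H]]]|[p [q [Sp Sq -> H]]]].
  left; exists (swap_outcome b2), (swap_outcome b1); rewrite !SK.
  by split=> // a /H [].
right; exists (swap_outcome q), (swap_outcome p); rewrite !SK.
split=> // [|a /H [] //]; rewrite /midpoint /=.
by congr (_ / 2, _ / 2); apply: addrC.
Qed.

Lemma NEO_in_collection_eq n m (A : collection R n) (B : collection R m) x :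
  (forall y, in_collection A y <-> in_collection B y) -> NEO A x -> NEO B x.
Proof. by move=> AB; rewrite !NEO_spec; apply: neo_spec_ext. Qed.

Lemma NEO_swap n (A : collection R n) x :
  (forall y, in_collection A (swap_outcome y) <-> in_collection A y) ->
  NEO A x -> NEO A (swap_outcome x).
Proof.
by move=> Aswap; rewrite !NEO_spec => /neo_spec_swap; apply: neo_spec_ext.
Qed.

Lemma in_collection_repeat_alt n (A : collection R n) j y :
  in_collection (repeat_alt A j) y <-> in_collection A y.
Proof.
split=> [[k <-]|[k <-]]; last by exists (lift ord_max k); rewrite /repeat_alt liftK.
by rewrite /repeat_alt; case: unliftP => [k' _|_]; [exists k'|exists j].
Qed.

Lemma symmetric_in_collection_swap n (A : collection R n) y :
  symmetric_collection A -> in_collection A y -> in_collection A (swap_outcome y).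
Proof.
case: y => y1 y2 symA [k Ak].
have : (0 < #|[set i | A i == (y2, y1)]|)%N.
  by rewrite -symA; apply/card_gt0P; exists k; rewrite inE Ak.
by case/card_gt0P=> k'; rewrite inE => /eqP; exists k'.
Qed.

End Characterization.

Section ParetoEfficiency.
Variables (R : realType) (n : nat) (A : collection R n.+1).
Variables (lo1 hi1 lo2 hi2 : 'I_n.+1).
Hypothesis lo1_min : forall a, (A lo1).1 <= (A a).1.
Hypothesis hi1_max : forall a, (A a).1 <= (A hi1).1.
Hypothesis lo2_min : forall a, (A lo2).2 <= (A a).2.
Hypothesis hi2_max : forall a, (A a).2 <= (A hi2).2.

Definition agreement_acceptable (g : 'I_n.+1) : bool :=
  ((A hi1).1 + (A lo1).1 <= 2 * (A g).1) &&
  ((A hi2).2 + (A lo2).2 <= 2 * (A g).2).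

Lemma agreement_acceptable_NEO g : agreement_acceptable g -> NEO A (A g).
Proof.
case/andP=> acc1 acc2; apply/NEO_spec; left.
exists (A lo1), (A lo2); split; try by eexists.
by move=> _ [a <-]; have := hi1_max a; have := hi2_max a; lra.
Qed.

Lemma favourites_midpoint_NEO : NEO A (midpoint (A hi1) (A hi2)).
Proof.
apply/NEO_spec; right; exists (A hi1), (A hi2); split; try by eexists.
by move=> _ [a <-].
Qed.

Lemma exists_pareto_efficient_NEO : exists x, NEO A x /\ pareto_efficient A x.
Proof.
case: (pickP agreement_acceptable) => [g0 acc_g0|no_acc].
  have [g acc_g g_max] := arg_maxP (fun g => (A g).1 + (A g).2) acc_g0.
  exists (A g); split; first exact: agreement_acceptable_NEO.
  case=> k [k1 k2]; have /andP[acc1 acc2] := acc_g.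
  have acc_k : agreement_acceptable k by apply/andP; split; lra.
  have : (A k).1 + (A k).2 <= (A g).1 + (A g).2 := g_max k acc_k.
  lra.
exists (midpoint (A hi1) (A hi2)); split; first exact: favourites_midpoint_NEO.
case=> k; rewrite /midpoint /= => -[k1 k2].
suff : agreement_acceptable k by rewrite no_acc.
by apply/andP; split; [have := lo1_min hi2|have := lo2_min hi1]; lra.
Qed.

End ParetoEfficiency.

Theorem corollary3 (R : realType) :
  (* symmetry *)
  (forall (n : nat) (A : collection R n),
      in_unit_square A -> symmetric_collection A ->
      forall x, NEO A x -> NEO A (swap_outcome x)) /\
  (* IRA *)
  (forall (n : nat) (A : collection R n) (j : 'I_n),
      in_unit_square A ->
      forall x, NEO A x <-> NEO (repeat_alt A j) x) /\
  (* existence of a Pareto efficient equilibrium (nonempty collections) *)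
  (forall (n : nat) (A : collection R n.+1),
      in_unit_square A ->
      exists x, NEO A x /\ pareto_efficient A x).
Proof.
split; [|split].
- move=> n A _ symA x; apply: NEO_swap => y.
  split; last exact: symmetric_in_collection_swap.
  by move/(symmetric_in_collection_swap symA); rewrite swap_outcomeK.
- move=> n A j _ x; split; apply: NEO_in_collection_eq => y;
    by rewrite in_collection_repeat_alt.
- move=> n A _.
  have [lo1 _ lo1_min] := arg_minP (fun a => (A a).1) (isT : predT ord0).
  have [hi1 _ hi1_max] := arg_maxP (fun a => (A a).1) (isT : predT ord0).
  have [lo2 _ lo2_min] := arg_minP (fun a => (A a).2) (isT : predT ord0).
  have [hi2 _ hi2_max] := arg_maxP (fun a => (A a).2) (isT : predT ord0).
  exact: (exists_pareto_efficient_NEO (lo1_min^~ isT) (hi1_max^~ isT)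
                                      (lo2_min^~ isT) (hi2_max^~ isT)).
Qed.
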